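(* Let $q$ be a real quadratic form on $\mathbb{R}^{1,3}$ (identified with the hermitian $2\times 2$ matrices as in the context), and let $Q$ be its symmetric $4\times 4$ matrix, $q(\mathbf{x})=\mathbf{x}^T Q\,\mathbf{x}$. Assume $Q$ is positive semidefinite and degenerate ($Q\ge 0$, $\dim\ker Q>0$). Assume $\ker Q$ contains a non-zero vector $\mathbf{n}=(n_0,\vec n)$ that is space-like or light-like, $\mathbf{n}\cdot\mathbf{n}=n_0^2-|\vec n|^2\le 0$. Define $f(\rho)=\sqrt{q(\mathbf{x})}$ for $\rho=\tfrac12(I+\vec x\cdot\vec\sigma)$ in the Bloch ball $\Omega$, with $\mathbf{x}=(1,\vec x)$. Then $f$ is a convex roof on $\Omega$. Equivalently, $$f(\rho)=\min\Big\{\sum_j p_j f(\pi_j)\ :\ \rho=\sum_j p_j\pi_j,\ \pi_j \text{ pure},\ p_j>0,\ \sum_j p_j=1\Big\}\qquad\text{for all }\rho\in\Omega.$$ Moreover, assume such an $\mathbf{n}$ can be chosen with $n_0=0$. Then the roof is flat: $\Omega$ is foliated into leaves, each the convex hull of some pure states, and $f$ is constant on each leaf.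
   Context: Hermitian $2\times2$ matrices are identified with Minkowski space $\mathbb{R}^{1,3}$ via $\mathbf{x}=(x_0,\vec x)\leftrightarrow \rho=\tfrac12(x_0 I+\vec x\cdot\vec\sigma)$, where $\vec\sigma$ are the Pauli matrices. The Minkowski product is $\mathbf{x}\cdot\mathbf{y}=x_0y_0-\vec x\cdot\vec y$. Under this identification $\det\rho=\tfrac14\mathbf{x}\cdot\mathbf{x}$ and $\mathrm{Tr}\rho=x_0$. The state space (Bloch ball) $\Omega$ is the set of $\mathbf{x}$ with $x_0=1$ and $|\vec x|\le 1$. Pure states are those with $|\vec x|=1$, i.e. the light-like vectors with $x_0=1$. A continuous function $f$ on $\Omega$ is a convex roof if it is convex and, for every $\rho\in\Omega$, there is a decomposition $\rho=\sum_j p_j\pi_j$ into pure states $\pi_j$ ($p_j>0$, $\sum p_j=1$) with $f(\rho)=\sum_j p_j f(\pi_j)$. The roof is flat if these decompositions can be chosen so that $f$ is constant on the convex hull of the $\pi_j$ occurring in each. *)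

From Stdlib Require Import Reals List.
Import ListNotations.
Open Scope R_scope.

Definition vec3 : Type := (R * R * R)%type.
Definition v1 (x : vec3) : R := fst (fst x).
Definition v2 (x : vec3) : R := snd (fst x).
Definition v3 (x : vec3) : R := snd x.
Definition norm2 (x : vec3) : R := v1 x * v1 x + v2 x * v2 x + v3 x * v3 x.
Definition vadd (x y : vec3) : vec3 := (v1 x + v1 y, v2 x + v2 y, v3 x + v3 y).
Definition vscale (t : R) (x : vec3) : vec3 := (t * v1 x, t * v2 x, t * v3 x).
Definition vzero : vec3 := (0, 0, 0).

(* State space Omega (Bloch ball), states rho = 1/2 (I + x.sigma) identified
   with their Bloch vector x; pure states are |x| = 1. *)
Definition in_Omega (x : vec3) : Prop := norm2 x <= 1.
Definition is_pure (x : vec3) : Prop := norm2 x = 1.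

(* Minkowski 4-vectors (x0,x1,x2,x3) as functions on indices 0..3 *)
Definition vec4 : Type := nat -> R.
Definition mk4 (a b c d : R) : vec4 :=
  fun i => match i with 0 => a | 1 => b | 2 => c | 3 => d | _ => 0 end.
Definition lift4 (x : vec3) : vec4 := mk4 1 (v1 x) (v2 x) (v3 x).
Definition minkowski (x y : vec4) : R := x 0%nat * y 0%nat - x 1%nat * y 1%nat
  - x 2%nat * y 2%nat - x 3%nat * y 3%nat.

Definition mat4 : Type := nat -> nat -> R.
Definition symmetric4 (Q : mat4) : Prop :=
  forall i j, (i < 4)%nat -> (j < 4)%nat -> Q i j = Q j i.
Definition qform (Q : mat4) (x : vec4) : R :=
  sum_f_R0 (fun i => sum_f_R0 (fun j => x i * Q i j * x j) 3) 3.
Definition matvec (Q : mat4) (x : vec4) (i : nat) : R :=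
  sum_f_R0 (fun j => Q i j * x j) 3.
Definition psd4 (Q : mat4) : Prop := forall x : vec4, 0 <= qform Q x.
Definition nonzero4 (x : vec4) : Prop := exists i, (i < 4)%nat /\ x i <> 0.
Definition in_kernel (Q : mat4) (x : vec4) : Prop :=
  forall i, (i < 4)%nat -> matvec Q x i = 0.
Definition degenerate4 (Q : mat4) : Prop := exists x, nonzero4 x /\ in_kernel Q x.

(* Decompositions into weighted states: list of (weight, Bloch vector) *)
Definition wsum (d : list (R * vec3)) : R := fold_right (fun pv s => fst pv + s) 0 d.
Definition bary (d : list (R * vec3)) : vec3 :=
  fold_right (fun pv s => vadd (vscale (fst pv) (snd pv)) s) vzero d.
Definition favg (f : vec3 -> R) (d : list (R * vec3)) : R :=
  fold_right (fun pv s => fst pv * f (snd pv) + s) 0 d.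

Definition pure_decomp (x : vec3) (d : list (R * vec3)) : Prop :=
  (forall pv, In pv d -> 0 < fst pv /\ is_pure (snd pv)) /\
  wsum d = 1 /\ bary d = x.

Definition in_hull (d : list (R * vec3)) (y : vec3) : Prop :=
  exists w : list R, length w = length d /\ Forall (fun a => 0 <= a) w /\
    fold_right Rplus 0 w = 1 /\
    bary (combine w (map snd d)) = y.

Definition continuous_on_Omega (f : vec3 -> R) : Prop :=
  forall x, in_Omega x -> forall eps, 0 < eps -> exists delta, 0 < delta /\
    forall y, in_Omega y -> norm2 (vadd y (vscale (-1) x)) < delta * delta ->
      Rabs (f y - f x) < eps.

Definition convex_on_Omega (f : vec3 -> R) : Prop :=
  forall x y t, in_Omega x -> in_Omega y -> 0 <= t <= 1 ->
    f (vadd (vscale t x) (vscale (1 - t) y)) <= t * f x + (1 - t) * f y.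

Definition convex_roof (f : vec3 -> R) : Prop :=
  continuous_on_Omega f /\ convex_on_Omega f /\
  forall x, in_Omega x -> exists d, pure_decomp x d /\ f x = favg f d.

Definition flat_roof (f : vec3 -> R) : Prop :=
  convex_roof f /\
  forall x, in_Omega x -> exists d, pure_decomp x d /\ f x = favg f d /\
    forall y, in_hull d y -> f y = f x.

(* Write X = (1, x) for the Minkowski lift of a state x and ‖Y‖ = sqrt(q(Y))
   for the seminorm of q.  Continuity and convexity of f(x) = ‖X‖ follow from
   the triangle inequality (a consequence of Cauchy-Schwarz for q) and positive
   homogeneity.  The roof property rests on two facts:
   - ‖cX + tn‖ = c‖X‖ for c >= 0 and n in ker Q, so f is "flat along n";
   - for an interior state, the plane spanned by X and a non-time-like n meets
     the future light cone in two rays, giving X = Y1 + Y2 with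
     Y1 = aX - sn, Y2 = bX + sn future null vectors and a, b >= 0, a + b = 1.
   Such a pair Y1, Y2 is a decomposition of x into the pure states Y_i/(Y_i)_0
   with weights (Y_i)_0, whose average value of f is ‖Y1‖ + ‖Y2‖ = (a+b) f(x).
   If moreover n_0 = 0, every point of the segment between the two pure states
   lifts to X + τn, where f takes the constant value f(x): the roof is flat. *)
From Stdlib Require Import Reals List Lra Lia Psatz.
Import ListNotations.
Open Scope R_scope.

Definition qnorm (Q : mat4) (X : vec4) : R := sqrt (qform Q X).
Definition fq (Q : mat4) (x : vec3) : R := qnorm Q (lift4 x).

Definition comb (c : R) (X : vec4) (t : R) (n : vec4) : vec4 := fun i => c * X i + t * n i.

Definition bil (Q : mat4) (X Y : vec4) : R :=
  sum_f_R0 (fun i => sum_f_R0 (fun j => X i * Q i j * Y j + Y i * Q i j * X j) 3) 3.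

Lemma qform_ext (Q : mat4) (X Y : vec4) :
  (forall i, (i < 4)%nat -> X i = Y i) -> qform Q X = qform Q Y.
Proof.
  intros H. unfold qform; simpl.
  rewrite (H 0%nat), (H 1%nat), (H 2%nat), (H 3%nat) by lia. reflexivity.
Qed.

Lemma qform_add_scaled (Q : mat4) (X Y : vec4) (s : R) :
  qform Q (fun i => X i + s * Y i) = qform Q X + s * bil Q X Y + s * s * qform Q Y.
Proof. unfold qform, bil; simpl. ring. Qed.

Lemma qform_scale (Q : mat4) (X : vec4) (s : R) :
  qform Q (fun i => s * X i) = s * s * qform Q X.
Proof. unfold qform; simpl. ring. Qed.

Lemma nonneg_quadratic_discriminant (a b c : R) :
  0 <= c -> (forall s, 0 <= a + s * b + s * s * c) -> b * b <= 4 * a * c.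
Proof.
  intros Hc H. destruct (Rle_lt_or_eq_dec _ _ Hc) as [Hc' | <-].
  - specialize (H (- b / (2 * c))).
    assert (E : 4 * c * (a + (- b / (2 * c)) * b + (- b / (2 * c)) * (- b / (2 * c)) * c)
                = 4 * a * c - b * b) by (field; lra).
    nra.
  - destruct (Req_dec b 0) as [-> | Hb]; [nra |].
    specialize (H (- (a + 1) / b)).
    assert (E : - (a + 1) / b * b = - (a + 1)) by (field; auto). nra.
Qed.

Lemma qform_cauchy_schwarz (Q : mat4) (Hpsd : psd4 Q) (X Y : vec4) :
  bil Q X Y * bil Q X Y <= 4 * qform Q X * qform Q Y.
Proof.
  apply nonneg_quadratic_discriminant; [apply Hpsd |].
  intros s. rewrite <- qform_add_scaled. apply Hpsd.
Qed.

Lemma qnorm_add_le (Q : mat4) (Hpsd : psd4 Q) (X Y : vec4) :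
  qnorm Q (fun i => X i + Y i) <= qnorm Q X + qnorm Q Y.
Proof.
  unfold qnorm.
  assert (E : qform Q (fun i => X i + Y i) = qform Q X + 1 * bil Q X Y + 1 * 1 * qform Q Y).
  { rewrite <- qform_add_scaled. apply qform_ext. intros; ring. }
  pose proof (qform_cauchy_schwarz Q Hpsd X Y) as CS.
  pose proof (sqrt_sqrt _ (Hpsd X)) as SX. pose proof (sqrt_sqrt _ (Hpsd Y)) as SY.
  pose proof (sqrt_pos (qform Q X)). pose proof (sqrt_pos (qform Q Y)).
  rewrite E, <- (sqrt_square (sqrt (qform Q X) + sqrt (qform Q Y))) by lra.
  apply sqrt_le_1_alt.
  set (b := bil Q X Y) in *.
  set (sx := sqrt (qform Q X)) in *. set (sy := sqrt (qform Q Y)) in *.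
  assert (b <= 2 * sx * sy).
  { destruct (Rle_or_lt b (2 * sx * sy)) as [| Hb]; [assumption |].
    rewrite <- SX, <- SY in CS. assert (0 <= sx * sy) by nra. nra. }
  nra.
Qed.

Lemma qnorm_scale (Q : mat4) (Hpsd : psd4 Q) (X : vec4) (s : R) :
  0 <= s -> qnorm Q (fun i => s * X i) = s * qnorm Q X.
Proof.
  intros Hs. unfold qnorm. rewrite qform_scale, sqrt_mult_alt by nra.
  rewrite sqrt_square by lra. reflexivity.
Qed.

Lemma qnorm_lipschitz (Q : mat4) (Hpsd : psd4 Q) (X Y : vec4) :
  Rabs (qnorm Q Y - qnorm Q X) <= qnorm Q (fun i => Y i - X i).
Proof.
  assert (HY : qnorm Q Y <= qnorm Q X + qnorm Q (fun i => Y i - X i)).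
  { rewrite <- qnorm_add_le by exact Hpsd. right. unfold qnorm. f_equal.
    apply qform_ext. intros; ring. }
  assert (HX : qnorm Q X <= qnorm Q Y + qnorm Q (fun i => Y i - X i)).
  { replace (qnorm Q (fun i => Y i - X i)) with (qnorm Q (fun i => (-1) * (Y i - X i))).
    - rewrite <- qnorm_add_le by exact Hpsd. right. unfold qnorm. f_equal.
      apply qform_ext. intros; ring.
    - unfold qnorm. rewrite qform_scale. f_equal. ring. }
  apply Rabs_le. lra.
Qed.

Lemma qform_kernel_shift (Q : mat4) (Hsym : symmetric4 Q) (n : vec4)
  (Hk : in_kernel Q n) (X : vec4) (t : R) :
  qform Q (fun i => X i + t * n i) = qform Q X.
Proof.
  rewrite qform_add_scaled.
  assert (Ebil : bil Q X n = 2 * (X 0%nat * matvec Q n 0 + X 1%nat * matvec Q n 1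
                                  + X 2%nat * matvec Q n 2 + X 3%nat * matvec Q n 3)).
  { unfold bil, matvec; simpl.
    rewrite (Hsym 1%nat 0%nat), (Hsym 2%nat 0%nat), (Hsym 3%nat 0%nat),
            (Hsym 2%nat 1%nat), (Hsym 3%nat 1%nat), (Hsym 3%nat 2%nat) by lia.
    ring. }
  assert (Eq : qform Q n = n 0%nat * matvec Q n 0 + n 1%nat * matvec Q n 1
                           + n 2%nat * matvec Q n 2 + n 3%nat * matvec Q n 3).
  { unfold qform, matvec; simpl. ring. }
  rewrite Ebil, Eq, !Hk by lia. ring.
Qed.

Lemma qnorm_comb (Q : mat4) (Hsym : symmetric4 Q) (Hpsd : psd4 Q) (n : vec4)
  (Hk : in_kernel Q n) (X : vec4) (c t : R) :
  0 <= c -> qnorm Q (comb c X t n) = c * qnorm Q X.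
Proof.
  intros Hc. rewrite <- qnorm_scale by assumption. unfold qnorm, comb.
  rewrite (qform_kernel_shift Q Hsym n Hk (fun i => c * X i)). reflexivity.
Qed.

Definition sqnorm4 (X : vec4) : R := sum_f_R0 (fun i => X i * X i) 3.
Definition entry_sum (Q : mat4) : R := sum_f_R0 (fun i => sum_f_R0 (fun j => Rabs (Q i j)) 3) 3.

Lemma entry_sum_nonneg (Q : mat4) : 0 <= entry_sum Q.
Proof.
  apply cond_pos_sum. intros i. apply cond_pos_sum. intros j. apply Rabs_pos.
Qed.

Lemma coord_sq_le_sqnorm4 (X : vec4) (i : nat) : (i <= 3)%nat -> X i * X i <= sqnorm4 X.
Proof.
  intros Hi. unfold sqnorm4; simpl.
  assert (forall r, 0 <= r * r) by (intros; nra).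
  destruct i as [| [| [| [| i]]]]; try lia;
    pose proof (H (X 0%nat)); pose proof (H (X 1%nat));
    pose proof (H (X 2%nat)); pose proof (H (X 3%nat)); lra.
Qed.

Lemma term_le_abs (a b c N : R) : a * a <= N -> b * b <= N -> a * c * b <= Rabs c * N.
Proof.
  intros Ha Hb. assert (a * b <= N) by nra. assert (- (a * b) <= N) by nra.
  destruct (Rcase_abs c) as [Hc | Hc].
  - rewrite Rabs_left by lra. nra.
  - rewrite Rabs_right by lra. nra.
Qed.

Lemma qform_le_entry_sum (Q : mat4) (X : vec4) : qform Q X <= entry_sum Q * sqnorm4 X.
Proof.
  unfold qform, entry_sum. rewrite Rmult_comm, scal_sum.
  apply sum_Rle. intros i Hi. rewrite Rmult_comm, scal_sum.
  apply sum_Rle. intros j Hj.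
  apply term_le_abs; apply coord_sq_le_sqnorm4; assumption.
Qed.

Lemma sqnorm4_lift_diff (x y : vec3) :
  sqnorm4 (fun i => lift4 y i - lift4 x i) = norm2 (vadd y (vscale (-1) x)).
Proof. unfold sqnorm4, lift4, mk4, norm2, vadd, vscale, v1, v2, v3; simpl. ring. Qed.

(* |f(y) - f(x)| <= ‖lift y - lift x‖ <= sqrt(1 + sum |Q_ij|) |y - x|. *)
Lemma fq_continuous (Q : mat4) (Hpsd : psd4 Q) : continuous_on_Omega (fq Q).
Proof.
  intros x _ eps Heps.
  set (C := 1 + entry_sum Q).
  assert (HC : 1 <= C) by (pose proof (entry_sum_nonneg Q); unfold C; lra).
  exists (eps / C). split; [apply Rdiv_lt_0_compat; lra |].
  intros y _ Hd. eapply Rle_lt_trans; [apply qnorm_lipschitz; exact Hpsd |].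
  set (D := fun i => lift4 y i - lift4 x i).
  assert (HqD : qform Q D < eps * eps).
  { pose proof (qform_le_entry_sum Q D) as Hle.
    replace (sqnorm4 D) with (norm2 (vadd y (vscale (-1) x))) in Hle
      by (symmetry; apply sqnorm4_lift_diff).
    set (M := norm2 (vadd y (vscale (-1) x))) in *.
    assert (HM : 0 <= M) by (unfold M, norm2; nra).
    assert (HCM : entry_sum Q * M <= C * M) by (unfold C; nra).
    assert (E : C * (eps / C * (eps / C)) = eps * eps / C) by (field; lra).
    assert (eps * eps / C <= eps * eps).
    { apply Rmult_le_reg_l with C; [lra |].
      replace (C * (eps * eps / C)) with (eps * eps) by (field; lra). nra. }
    assert (C * M < C * (eps / C * (eps / C))) by (apply Rmult_lt_compat_l; lra).
    lra. }
  unfold qnorm. rewrite <- (sqrt_square eps) by lra.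
  apply sqrt_lt_1_alt. split; [apply Hpsd | exact HqD].
Qed.

Lemma lift4_convex (x y : vec3) (t : R) (i : nat) : (i < 4)%nat ->
  lift4 (vadd (vscale t x) (vscale (1 - t) y)) i = t * lift4 x i + (1 - t) * lift4 y i.
Proof.
  intros Hi. destruct i as [| [| [| [| i]]]]; try lia;
    unfold lift4, mk4, vadd, vscale, v1, v2, v3; simpl; ring.
Qed.

Lemma fq_convex (Q : mat4) (Hpsd : psd4 Q) : convex_on_Omega (fq Q).
Proof.
  intros x y t _ _ Ht. unfold fq.
  rewrite <- (qnorm_scale Q Hpsd (lift4 x) t), <- (qnorm_scale Q Hpsd (lift4 y) (1 - t)) by lra.
  eapply Rle_trans; [| apply qnorm_add_le; exact Hpsd].
  right. unfold qnorm. f_equal. apply qform_ext. intros i Hi. apply lift4_convex, Hi.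
Qed.

Lemma cauchy_schwarz3 (a1 a2 a3 b1 b2 b3 : R) :
  (a1 * b1 + a2 * b2 + a3 * b3) * (a1 * b1 + a2 * b2 + a3 * b3)
  <= (a1 * a1 + a2 * a2 + a3 * a3) * (b1 * b1 + b2 * b2 + b3 * b3).
Proof.
  assert (Lagrange : (a1 * a1 + a2 * a2 + a3 * a3) * (b1 * b1 + b2 * b2 + b3 * b3)
    - (a1 * b1 + a2 * b2 + a3 * b3) * (a1 * b1 + a2 * b2 + a3 * b3)
    = (a1 * b2 - a2 * b1) * (a1 * b2 - a2 * b1) + (a1 * b3 - a3 * b1) * (a1 * b3 - a3 * b1)
      + (a2 * b3 - a3 * b2) * (a2 * b3 - a3 * b2)) by ring.
  assert (forall r, 0 <= r * r) by (intros; nra).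
  pose proof (H (a1 * b2 - a2 * b1)). pose proof (H (a1 * b3 - a3 * b1)).
  pose proof (H (a2 * b3 - a3 * b2)). lra.
Qed.

Lemma null_pairing_bound (x : vec3) (Y : vec4) : minkowski Y Y = 0 ->
  (v1 x * Y 1%nat + v2 x * Y 2%nat + v3 x * Y 3%nat)
  * (v1 x * Y 1%nat + v2 x * Y 2%nat + v3 x * Y 3%nat) <= norm2 x * (Y 0%nat * Y 0%nat).
Proof.
  intros HY. unfold minkowski in HY. unfold norm2.
  replace (Y 0%nat * Y 0%nat) with (Y 1%nat * Y 1%nat + Y 2%nat * Y 2%nat + Y 3%nat * Y 3%nat)
    by lra.
  apply cauchy_schwarz3.
Qed.

Lemma minkowski_lift4 (x : vec3) (Y : vec4) :
  minkowski (lift4 x) Y = Y 0%nat - (v1 x * Y 1%nat + v2 x * Y 2%nat + v3 x * Y 3%nat).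
Proof. unfold minkowski, lift4, mk4; simpl. ring. Qed.

Lemma null_future_of_pairing (x : vec3) (Y : vec4) : norm2 x < 1 ->
  minkowski Y Y = 0 -> 0 < minkowski (lift4 x) Y -> 0 < Y 0%nat.
Proof.
  intros Hx HY Hp. rewrite minkowski_lift4 in Hp.
  pose proof (null_pairing_bound x Y HY) as Hb.
  assert (0 <= norm2 x) by (unfold norm2; nra).
  set (p := v1 x * Y 1%nat + v2 x * Y 2%nat + v3 x * Y 3%nat) in *.
  destruct (Rlt_or_le 0 (Y 0%nat)) as [| H0]; [assumption | exfalso].
  assert (Y 0%nat * Y 0%nat < p * p) by nra.
  nra.
Qed.

Lemma null_orthogonal_zero (x : vec3) (Y : vec4) : norm2 x < 1 ->
  minkowski Y Y = 0 -> minkowski (lift4 x) Y = 0 -> forall i, (i < 4)%nat -> Y i = 0.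
Proof.
  intros Hx HY Hp. rewrite minkowski_lift4 in Hp.
  pose proof (null_pairing_bound x Y HY) as Hb.
  assert (0 <= norm2 x) by (unfold norm2; nra).
  assert (H0 : Y 0%nat = 0).
  { replace (v1 x * Y 1%nat + v2 x * Y 2%nat + v3 x * Y 3%nat) with (Y 0%nat) in Hb by lra.
    assert (Y 0%nat * Y 0%nat <= 0).
    { apply Rmult_le_reg_r with (1 - norm2 x); lra. }
    nra. }
  unfold minkowski in HY. rewrite H0 in HY.
  intros i Hi. destruct i as [| [| [| [| i]]]]; try lia; nra.
Qed.

(* Future-pointing light-like 4-vectors; they are positive multiples of lifts of pure states. *)
Definition future_null (Y : vec4) : Prop := 0 < Y 0%nat /\ minkowski Y Y = 0.

Lemma minkowski_comb_self (X n : vec4) (c t : R) :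
  minkowski (comb c X t n) (comb c X t n)
  = c * c * minkowski X X + 2 * c * t * minkowski X n + t * t * minkowski n n.
Proof. unfold minkowski, comb. ring. Qed.

Lemma minkowski_comb_pair (X n : vec4) (c t : R) :
  minkowski X (comb c X t n) = c * minkowski X X + t * minkowski X n.
Proof. unfold minkowski, comb. ring. Qed.

(* The plane through the lift X of an interior state and a non-time-like n
   cuts the future light cone in two rays: X = Y1 + Y2 with
   Y1 = aX - sn and Y2 = bX + sn future null, a, b >= 0, a + b = 1.  With
   A = X.X, B = X.n, C = n.n and D = sqrt(B^2 - AC) > 0, one takes
   a = (D+B)/2D, b = (D-B)/2D, s = A/2D, so that X.Y1 = X.Y2 = A/2 > 0. *)
Lemma interior_null_split (x : vec3) (n : vec4) :
  norm2 x < 1 -> nonzero4 n -> minkowski n n <= 0 ->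
  exists a b s, 0 <= a /\ 0 <= b /\ a + b = 1 /\
    future_null (comb a (lift4 x) (- s) n) /\ future_null (comb b (lift4 x) s n).
Proof.
  intros Hx Hnz HC.
  set (X := lift4 x).
  set (A := minkowski X X). set (B := minkowski X n). set (C := minkowski n n) in HC.
  assert (HA : 0 < A).
  { replace A with (1 - norm2 x) by (unfold A, X, minkowski, lift4, mk4, norm2; simpl; ring).
    lra. }
  assert (HE : 0 < B * B - A * C).
  { destruct (Rlt_or_le 0 (B * B - A * C)) as [| HE]; [assumption | exfalso].
    assert (HB0 : B = 0) by nra. assert (HC0 : C = 0) by nra.
    destruct Hnz as [i [Hi Hni]]. apply Hni.
    apply (null_orthogonal_zero x n); assumption. }
  set (D := sqrt (B * B - A * C)).
  assert (HDD : D * D = B * B - A * C) by (apply sqrt_sqrt; lra).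
  assert (HD : 0 < D) by (apply sqrt_lt_R0; exact HE).
  assert (HDB : - D <= B <= D) by (split; nra).
  exists ((D + B) / (2 * D)), ((D - B) / (2 * D)), (A / (2 * D)).
  assert (Hnull : forall c t, c * c * A + 2 * c * t * B + t * t * C
                              = A * (D * D - B * B + A * C) / (4 * D * D) ->
                  minkowski (comb c X t n) (comb c X t n) = 0).
  { intros c t Hct. rewrite minkowski_comb_self. fold A B C. rewrite Hct, HDD.
    field. lra. }
  assert (Hfuture : forall Y, minkowski Y Y = 0 -> minkowski X Y = A / 2 -> future_null Y).
  { intros Y HY HXY. split; [| exact HY].
    apply (null_future_of_pairing x); [assumption | assumption | fold X; lra]. }
  split; [| split; [| split; [| split]]].
  - apply Rmult_le_pos; [lra | left; apply Rinv_0_lt_compat; lra].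
  - apply Rmult_le_pos; [lra | left; apply Rinv_0_lt_compat; lra].
  - field. lra.
  - apply Hfuture.
    + apply Hnull. field. lra.
    + rewrite minkowski_comb_pair. fold A B. field. lra.
  - apply Hfuture.
    + apply Hnull. field. lra.
    + rewrite minkowski_comb_pair. fold A B. field. lra.
Qed.

Definition state_of (Y : vec4) : vec3 :=
  (Y 1%nat / Y 0%nat, Y 2%nat / Y 0%nat, Y 3%nat / Y 0%nat).
Definition null_pair_decomp (Y1 Y2 : vec4) : list (R * vec3) :=
  [(Y1 0%nat, state_of Y1); (Y2 0%nat, state_of Y2)].

Lemma vec3_eq (a b : vec3) : v1 a = v1 b -> v2 a = v2 b -> v3 a = v3 b -> a = b.
Proof.
  destruct a as [[a1 a2] a3], b as [[b1 b2] b3]; unfold v1, v2, v3; simpl.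
  intros; subst; reflexivity.
Qed.

Lemma state_of_pure (Y : vec4) : future_null Y -> is_pure (state_of Y).
Proof.
  intros [HY0 HY]. unfold is_pure, norm2, state_of, v1, v2, v3, minkowski in *; simpl.
  replace (Y 1%nat / Y 0%nat * (Y 1%nat / Y 0%nat) + Y 2%nat / Y 0%nat * (Y 2%nat / Y 0%nat)
           + Y 3%nat / Y 0%nat * (Y 3%nat / Y 0%nat))
    with ((Y 1%nat * Y 1%nat + Y 2%nat * Y 2%nat + Y 3%nat * Y 3%nat) / (Y 0%nat * Y 0%nat))
    by (field; lra).
  replace (Y 1%nat * Y 1%nat + Y 2%nat * Y 2%nat + Y 3%nat * Y 3%nat) with (Y 0%nat * Y 0%nat)
    by lra.
  field. lra.
Qed.

(* Y = Y0 (1, state_of Y), hence Y0 f(state_of Y) = ‖Y‖. *)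
Lemma fq_state_of (Q : mat4) (Hpsd : psd4 Q) (Y : vec4) :
  0 < Y 0%nat -> Y 0%nat * fq Q (state_of Y) = qnorm Q Y.
Proof.
  intros HY0. unfold fq. rewrite <- (qnorm_scale Q Hpsd) by lra.
  unfold qnorm. f_equal. apply qform_ext. intros i Hi.
  destruct i as [| [| [| [| i]]]]; try lia;
    unfold lift4, mk4, state_of, v1, v2, v3; simpl; field; lra.
Qed.

Lemma null_pair_decomposition (Q : mat4) (Hpsd : psd4 Q) (x : vec3) (Y1 Y2 : vec4) :
  future_null Y1 -> future_null Y2 -> (forall i, (i < 4)%nat -> Y1 i + Y2 i = lift4 x i) ->
  pure_decomp x (null_pair_decomp Y1 Y2) /\
  favg (fq Q) (null_pair_decomp Y1 Y2) = qnorm Q Y1 + qnorm Q Y2.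
Proof.
  intros HY1 HY2 Hsum.
  pose proof (proj1 HY1) as H1. pose proof (proj1 HY2) as H2.
  split; [split; [| split] |].
  - intros pv [<- | [<- | []]]; simpl; split; try assumption; apply state_of_pure; assumption.
  - simpl. rewrite Rplus_0_r. apply (Hsum 0%nat). lia.
  - pose proof (Hsum 1%nat ltac:(lia)) as E1. pose proof (Hsum 2%nat ltac:(lia)) as E2.
    pose proof (Hsum 3%nat ltac:(lia)) as E3. unfold lift4, mk4 in E1, E2, E3.
    apply vec3_eq; [rewrite <- E1 | rewrite <- E2 | rewrite <- E3];
      unfold bary, vadd, vscale, vzero, state_of, v1, v2, v3; simpl; field; lra.
  - simpl. rewrite !fq_state_of by assumption. ring.
Qed.

Lemma in_hull_single (p : R) (y1 y : vec3) : in_hull [(p, y1)] y -> y = y1.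
Proof.
  intros [w [Hl [_ [Hs Hb]]]]. destruct w as [| w1 [| w2 w]]; simpl in Hl; try lia.
  simpl in Hs, Hb. subst y. assert (w1 = 1) by lra. subst.
  apply vec3_eq; unfold vadd, vscale, vzero, v1, v2, v3; simpl; ring.
Qed.

Lemma in_hull_pair (p1 p2 : R) (y1 y2 y : vec3) : in_hull [(p1, y1); (p2, y2)] y ->
  exists w, y = vadd (vscale w y1) (vscale (1 - w) y2).
Proof.
  intros [w [Hl [_ [Hs Hb]]]]. destruct w as [| w1 [| w2 [| w3 w]]]; simpl in Hl; try lia.
  simpl in Hs, Hb. subst y. exists w1. assert (w2 = 1 - w1) by lra. subst.
  apply vec3_eq; unfold vadd, vscale, vzero, v1, v2, v3; simpl; ring.
Qed.

Lemma segment_lift_on_line (x : vec3) (n : vec4) (a b t1 t2 w : R) :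
  0 < a -> 0 < b -> n 0%nat = 0 -> forall i, (i < 4)%nat ->
  lift4 (vadd (vscale w (state_of (comb a (lift4 x) t1 n)))
              (vscale (1 - w) (state_of (comb b (lift4 x) t2 n)))) i
  = comb 1 (lift4 x) (w * t1 / a + (1 - w) * t2 / b) n i.
Proof.
  intros Ha Hb Hn0 i Hi.
  destruct i as [| [| [| [| i]]]]; try lia;
    unfold lift4, mk4, vadd, vscale, state_of, comb, v1, v2, v3; simpl;
    rewrite Hn0; field; lra.
Qed.

Lemma roof_decomposition (Q : mat4) (Hsym : symmetric4 Q) (Hpsd : psd4 Q) (n : vec4)
  (Hnz : nonzero4 n) (Hk : in_kernel Q n) (Hm : minkowski n n <= 0)
  (x : vec3) (Hx : in_Omega x) :
  exists d, pure_decomp x d /\ fq Q x = favg (fq Q) d /\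
    (n 0%nat = 0 -> forall y, in_hull d y -> fq Q y = fq Q x).
Proof.
  destruct (Req_dec (norm2 x) 1) as [Hpure | Hint].
  { exists [(1, x)]. split; [split; [| split] | split].
    - intros pv [<- | []]; simpl; split; [lra | exact Hpure].
    - simpl; lra.
    - apply vec3_eq; unfold bary, vadd, vscale, vzero, v1, v2, v3; simpl; ring.
    - simpl; ring.
    - intros _ y Hy. apply in_hull_single in Hy. subst; reflexivity. }
  assert (Hlt : norm2 x < 1) by (unfold in_Omega in Hx; lra).
  destruct (interior_null_split x n Hlt Hnz Hm) as (a & b & s & Ha & Hb & Hab & HY1 & HY2).
  set (Y1 := comb a (lift4 x) (- s) n) in *. set (Y2 := comb b (lift4 x) s n) in *.
  assert (Hsum : forall i, (i < 4)%nat -> Y1 i + Y2 i = lift4 x i).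
  { intros i _. unfold Y1, Y2, comb. replace b with (1 - a) by lra. ring. }
  destruct (null_pair_decomposition Q Hpsd x Y1 Y2 HY1 HY2 Hsum) as [Hd Havg].
  exists (null_pair_decomp Y1 Y2). split; [exact Hd | split].
  - rewrite Havg. unfold Y1, Y2. rewrite !(qnorm_comb Q Hsym Hpsd n Hk) by assumption.
    unfold fq. replace b with (1 - a) by lra. ring.
  - intros Hn0 y Hy. apply in_hull_pair in Hy as [w ->]. unfold Y1, Y2 in *.
    (* With n0 = 0 the weights (Y_i)_0 are a and b themselves. *)
    assert (Ha0 : 0 < a) by (destruct HY1 as [H _]; unfold comb, lift4, mk4 in H;
                             rewrite Hn0 in H; lra).
    assert (Hb0 : 0 < b) by (destruct HY2 as [H _]; unfold comb, lift4, mk4 in H;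
                             rewrite Hn0 in H; lra).
    unfold fq, qnorm.
    rewrite (qform_ext Q _ _ (segment_lift_on_line x n a b (- s) s w Ha0 Hb0 Hn0)).
    fold (qnorm Q (comb 1 (lift4 x) (w * - s / a + (1 - w) * s / b) n)).
    rewrite (qnorm_comb Q Hsym Hpsd n Hk) by lra. unfold qnorm. ring.
Qed.

Theorem theorem2 (Q : mat4)
  (Hsym : symmetric4 Q) (Hpsd : psd4 Q) (Hdeg : degenerate4 Q)
  (Hn : exists n : vec4, nonzero4 n /\ in_kernel Q n /\ minkowski n n <= 0) :
  let f := fun x : vec3 => sqrt (qform Q (lift4 x)) in
  convex_roof f /\
  ((exists n : vec4, nonzero4 n /\ in_kernel Q n /\ n 0%nat = 0) -> flat_roof f).
Proof.
  intros f. change f with (fq Q).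
  assert (Hroof : convex_roof (fq Q)).
  { split; [apply fq_continuous, Hpsd | split; [apply fq_convex, Hpsd |]].
    intros x Hx. destruct Hn as (n & Hnz & Hk & Hm).
    destruct (roof_decomposition Q Hsym Hpsd n Hnz Hk Hm x Hx) as (d & Hd & Hf & _).
    exists d; split; assumption. }
  split; [exact Hroof |].
  intros (n & Hnz & Hk & Hn0). split; [exact Hroof |].
  assert (Hm : minkowski n n <= 0) by (unfold minkowski; rewrite Hn0; nra).
  intros x Hx.
  destruct (roof_decomposition Q Hsym Hpsd n Hnz Hk Hm x Hx) as (d & Hd & Hf & Hflat).
  exists d. split; [exact Hd | split; [exact Hf | exact (Hflat Hn0)]].
Qed.
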